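(* In the $\ell^1$ linear social choice setting, random dictatorship $f_{\mathrm{RD}}$ satisfies $\mathrm{D}(f_{\mathrm{RD}})=\Omega(d)$ and $\mathrm{D}(f_{\mathrm{RD}})=O(d^3)$.
   Context: Setting ($\ell^1$ linear social choice). Fix a dimension $d\ge 1$ and let $\Delta_d=\{x\in\mathbb{R}^d_{\ge 0}:\sum_i x^i=1\}$. An instance consists of a finite set $V$ of $n$ voters and a finite set $C$ of $m$ candidates, each a vector in $\Delta_d$, with every voter vector in $\mathrm{Cone}(C)$ (nonnegative linear combinations of candidate vectors). Utility: $u_v(c)=v^\top c$. Each voter reports a ranking of $C$ consistent with its utilities (ties broken arbitrarily). $\mathrm{UW}(c)=\sum_{v\in V}u_v(c)$. A randomized voting rule outputs a distribution over $C$ from the profile only. Distortion on an instance: $\max_c\mathrm{UW}(c)/\mathbb{E}_{c\sim f}[\mathrm{UW}(c)]$; $\mathrm{D}(f)$ is the supremum over all instances, as a function of $d$. Random dictatorship $f_{\mathrm{RD}}$: pick a voter uniformly at random and output that voter's top-ranked candidate. *)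

From HB Require Import structures.
From mathcomp Require Import all_boot all_order all_algebra.
From mathcomp Require Import reals.
Set Implicit Arguments. Unset Strict Implicit. Unset Printing Implicit Defensive.
Import Order.TTheory GRing.Theory Num.Theory.
Local Open Scope ring_scope.

Section L1SocialChoice.
Variable R : realType.

Definition dotp (d : nat) (x y : 'I_d -> R) : R := \sum_(i < d) x i * y i.

Definition in_simplex (d : nat) (x : 'I_d -> R) : Prop :=
  (forall i, 0 <= x i) /\ \sum_(i < d) x i = 1.

Definition in_cone (d m : nat) (cand : 'I_m -> 'I_d -> R) (x : 'I_d -> R) : Prop :=
  exists lam : 'I_m -> R, (forall j, 0 <= lam j) /\
    (forall i, x i = \sum_(j < m) lam j * cand j i).

Definition UW (d n m : nat) (vot : 'I_n -> 'I_d -> R) (cand : 'I_m -> 'I_d -> R)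
  (j : 'I_m) : R := \sum_(k < n) dotp (vot k) (cand j).

(* A valid instance: n >= 1 voters, candidates and voters in the simplex,
   voters in Cone(C), and top k is the top-ranked candidate of voter k
   in a ranking consistent with utilities (ties broken arbitrarily, i.e.
   any utility maximizer). *)
Definition valid_instance (d n m : nat) (vot : 'I_n -> 'I_d -> R)
  (cand : 'I_m -> 'I_d -> R) (top : 'I_n -> 'I_m) : Prop :=
  [/\ (0 < n)%N,
      (forall k, in_simplex (vot k)),
      (forall j, in_simplex (cand j)),
      (forall k, in_cone cand (vot k)) &
      (forall k j, dotp (vot k) (cand j) <= dotp (vot k) (cand (top k)))].

Definition RD_welfare (d n m : nat) (vot : 'I_n -> 'I_d -> R)
  (cand : 'I_m -> 'I_d -> R) (top : 'I_n -> 'I_m) : R :=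
  (\sum_(k < n) UW vot cand (top k)) / n%:R.

Definition RD_distortion (d n m : nat) (vot : 'I_n -> 'I_d -> R)
  (cand : 'I_m -> 'I_d -> R) (top : 'I_n -> 'I_m) : R :=
  (\big[Num.max/0]_(j < m) UW vot cand j) / RD_welfare vot cand top.

End L1SocialChoice.

From HB Require Import structures.
From mathcomp Require Import all_boot all_order all_algebra.
From mathcomp Require Import reals.
From mathcomp Require Import ring lra.
Import Order.TTheory GRing.Theory Num.Theory.
Set Implicit Arguments. Unset Strict Implicit. Unset Printing Implicit Defensive.
Local Open Scope ring_scope.

(* Upper bound: a voter v in Cone(C) is a convex combination of candidates, so
   its top candidate t satisfies v.t >= |v|^2 >= 1/d.  Call a coordinate light
   when the total vote s = sum_k v_k puts less than sig = n/(4d^2) on it.  The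
   coordinates where v has mass >= 1/(2d) carry at least half of v.t; if one
   of them is light, v is charged to the light mass, otherwise t has welfare
   s.t >= sig/(2d).  The total light mass is at most d*sig, so at most half
   of the voters are charged, and the expected welfare of random dictatorship
   is at least n/(16 d^3), against a best welfare of at most n.
   Lower bound: with d candidates e_j and voters (e_k + e_0)/2, every voter k
   picks e_k, giving expected welfare 1, whereas e_0 has welfare (d+1)/2. *)

Section Simplex.
Variables (R : realType) (d : nat).
Implicit Types (x v c s : 'I_d -> R).

Lemma simplex_dim_gt0 v : in_simplex v -> (0 < d)%N.
Proof.
by case: d v => [v [_]|//]; rewrite big_ord0 => /eqP; rewrite eq_sym oner_eq0.
Qed.

Lemma simplex_le1 v i : in_simplex v -> v i <= 1.
Proof. by case=> v0 <-; rewrite (bigD1 i) //= lerDl sumr_ge0. Qed.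

Lemma dotp_ge0 s c :
  (forall i, 0 <= s i) -> (forall i, 0 <= c i) -> 0 <= dotp s c.
Proof. by move=> s0 c0; apply: sumr_ge0 => i _; apply: mulr_ge0. Qed.

Lemma dotp_simplex_le1 v c : in_simplex v -> in_simplex c -> dotp v c <= 1.
Proof.
move=> [v0 <-] hc; rewrite /dotp; apply: ler_sum => i _.
by rewrite ler_piMr // simplex_le1.
Qed.

Lemma simplex_dotp_self_ge v : in_simplex v -> 1 <= d%:R * dotp v v.
Proof.
move=> hv; have [_ v1] := hv.
have d1 : 1 <= d%:R :> R by rewrite ler1n (simplex_dim_gt0 hv).
have : 0 <= \sum_(i < d) (d%:R * v i - 1) ^+ 2 by apply: sumr_ge0 => i _; apply: sqr_ge0.
have -> : \sum_(i < d) (d%:R * v i - 1) ^+ 2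
    = d%:R * d%:R * dotp v v - 2 * d%:R * \sum_(i < d) v i + d%:R.
  rewrite (eq_bigr (fun i => d%:R * d%:R * (v i * v i) - 2 * d%:R * v i + 1)).
    by rewrite big_split sumrB /= -!mulr_sumr sumr_const card_ord.
  by move=> i _; ring.
rewrite v1; nra.
Qed.

Lemma dotp_cone m (cand : 'I_m -> 'I_d -> R) (lam : 'I_m -> R) x v :
  (forall i, x i = \sum_(j < m) lam j * cand j i) ->
  dotp v x = \sum_(j < m) lam j * dotp v (cand j).
Proof.
move=> hx; rewrite /dotp (eq_bigr _ (fun i _ => congr1 _ (hx i))).
under eq_bigr do rewrite mulr_sumr.
rewrite exchange_big /=; apply: eq_bigr => j _; rewrite mulr_sumr.
by apply: eq_bigr => i _; ring.
Qed.

Lemma cone_weights_sum1 m (cand : 'I_m -> 'I_d -> R) (lam : 'I_m -> R) v :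
  in_simplex v -> (forall j, in_simplex (cand j)) ->
  (forall i, v i = \sum_(j < m) lam j * cand j i) -> \sum_(j < m) lam j = 1.
Proof.
move=> [_ <-] cs hv; rewrite (eq_bigr _ (fun i _ => hv i)) exchange_big /=.
by apply: eq_bigr => j _; rewrite -mulr_sumr; have [_ ->] := cs j; rewrite mulr1.
Qed.

Lemma top_utility_ge m (cand : 'I_m -> 'I_d -> R) v (t : 'I_m) :
  in_simplex v -> (forall j, in_simplex (cand j)) -> in_cone cand v ->
  (forall j, dotp v (cand j) <= dotp v (cand t)) ->
  1 <= d%:R * dotp v (cand t).
Proof.
move=> hv cs [lam [lam0 hlam]] ht.
apply: le_trans (simplex_dotp_self_ge hv) _; rewrite ler_wpM2l //.
rewrite (dotp_cone v hlam) -[X in _ <= X]mul1r -(cone_weights_sum1 hv cs hlam).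
by rewrite mulr_suml; apply: ler_sum => j _; rewrite ler_wpM2l.
Qed.

Lemma heavy_coords_weight_ge v c :
  in_simplex v -> in_simplex c -> 1 <= d%:R * dotp v c ->
  1 <= 2 * d%:R * \sum_(i | 1 <= 2 * d%:R * v i) c i.
Proof.
move=> hv [c0 c1] hvc.
have d0 : 0 <= d%:R :> R by [].
suff : 2 * d%:R * dotp v c <= 2 * d%:R * \sum_(i | 1 <= 2 * d%:R * v i) c i + 1.
  by nra.
rewrite -[X in _ + X]c1 /dotp !mulr_sumr [X in _ <= X + _]big_mkcond -big_split /=.
apply: ler_sum => i _; have := c0 i; have := mulr_ge0 d0 (c0 i).
case: ifP => [_|/negbT]; rewrite ?add0r -?ltNge; have := simplex_le1 i hv; nra.
Qed.

Lemma voter_welfare_bound v c s (sig : R) :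
  in_simplex v -> in_simplex c -> (forall i, 0 <= s i) -> 0 <= sig ->
  1 <= d%:R * dotp v c ->
  sig * (1 - 2 * d%:R * \sum_(i | s i < sig) v i) <= 2 * d%:R * dotp s c.
Proof.
move=> hv hc s0 sig0 hvc; have [v0 _] := hv; have [c0 _] := hc.
have d0 : 0 <= d%:R :> R by [].
have sc0 := dotp_ge0 s0 c0.
have light0 : 0 <= \sum_(i | s i < sig) v i by apply: sumr_ge0.
have [/existsP[i /andP[light heavy]] | /existsPn no_light_heavy] :=
  boolP [exists i, (s i < sig) && (1 <= 2 * d%:R * v i)].
  have : 1 <= 2 * d%:R * \sum_(i | s i < sig) v i.
    apply: le_trans heavy _; rewrite ler_wpM2l ?mulr_ge0 //.
    by rewrite (bigD1 i) //= lerDl sumr_ge0.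
  by nra.
have := heavy_coords_weight_ge hv hc hvc.
have : sig * \sum_(i | 1 <= 2 * d%:R * v i) c i <= dotp s c.
  rewrite mulr_sumr big_mkcond /dotp; apply: ler_sum => i _.
  case: ifP => heavy; last by rewrite mulr_ge0.
  rewrite ler_wpM2r // leNgt; apply: contraNN (no_light_heavy i) => light.
  by rewrite light heavy.
have := mulr_ge0 (mulr_ge0 d0 sig0) light0; nra.
Qed.

End Simplex.

Definition total_vote (R : realType) (d n : nat) (vot : 'I_n -> 'I_d -> R) :
  'I_d -> R := fun i => \sum_(k < n) vot k i.

Section UpperBound.
Variables (R : realType) (d n m : nat).
Variables (vot : 'I_n -> 'I_d -> R) (cand : 'I_m -> 'I_d -> R) (top : 'I_n -> 'I_m).
Hypothesis inst : valid_instance vot cand top.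

Let s := total_vote vot.

Lemma UW_total_vote j : UW vot cand j = dotp s (cand j).
Proof.
rewrite /UW /dotp exchange_big /=; apply: eq_bigr => i _.
by rewrite mulr_suml.
Qed.

Lemma total_vote_ge0 i : 0 <= s i.
Proof. by case: inst => _ vs _ _ _; apply: sumr_ge0 => k _; have [] := vs k. Qed.

Lemma max_UW_le : \big[Num.max/0]_(j < m) UW vot cand j <= n%:R.
Proof.
case: inst => _ vs cs _ _; apply: bigmax_le => // j _.
have -> : n%:R = \sum_(k < n) 1 :> R by rewrite sumr_const card_ord.
by apply: ler_sum => k _; apply: dotp_simplex_le1.
Qed.

Lemma light_mass_le (sig : R) : 0 <= sig ->
  \sum_(k < n) \sum_(i | s i < sig) vot k i <= d%:R * sig.
Proof.
have -> : d%:R * sig = \sum_(i < d) sig by rewrite sumr_const card_ord mulr_natl.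
move=> sig0; rewrite exchange_big big_mkcond /=; apply: ler_sum => i _.
by case: ifP => [/ltW|_]; rewrite // mul1r.
Qed.

Lemma total_RD_welfare_ge :
  n%:R ^+ 2 <= 16 * d%:R ^+ 3 * \sum_(k < n) UW vot cand (top k).
Proof.
have [n0 vs cs vc vt] := inst.
have d_gt0 : 0 < d%:R :> R by rewrite ltr0n (simplex_dim_gt0 (vs (Ordinal n0))).
pose sig : R := n%:R / (4 * d%:R ^+ 2).
have sig_def : 4 * d%:R ^+ 2 * sig = n%:R.
  by rewrite /sig mulrC divfK // gt_eqF // mulr_gt0 // exprn_gt0.
have sig0 : 0 <= sig by rewrite /sig divr_ge0 // mulr_ge0 // sqr_ge0.
pose light k := \sum_(i | s i < sig) vot k i.
have per_voter k : sig * (1 - 2 * d%:R * light k) <= 2 * d%:R * UW vot cand (top k).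
  rewrite UW_total_vote; apply: voter_welfare_bound total_vote_ge0 sig0 _ => //.
  exact: top_utility_ge.
have summed : sig * (n%:R - 2 * d%:R * \sum_(k < n) light k)
    <= 2 * d%:R * \sum_(k < n) UW vot cand (top k).
  have -> : n%:R = \sum_(k < n) 1 :> R by rewrite sumr_const card_ord.
  rewrite [2 * _ * \sum_(k < n) light k]mulr_sumr -sumrB !mulr_sumr.
  exact: ler_sum.
have light_total : sig * (n%:R - 2 * d%:R * (d%:R * sig))
    <= sig * (n%:R - 2 * d%:R * \sum_(k < n) light k).
  by rewrite ler_wpM2l // lerD2l lerN2 ler_wpM2l ?mulr_ge0 ?light_mass_le.
have -> : n%:R ^+ 2 = 8 * d%:R ^+ 2 * (sig * (n%:R - 2 * d%:R * (d%:R * sig))).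
  by rewrite -sig_def; ring.
have -> : 16 * d%:R ^+ 3 * \sum_(k < n) UW vot cand (top k)
    = 8 * d%:R ^+ 2 * (2 * d%:R * \sum_(k < n) UW vot cand (top k)) by ring.
by rewrite ler_wpM2l ?mulr_ge0 ?sqr_ge0 // (le_trans light_total summed).
Qed.

Lemma RD_distortion_le : RD_distortion vot cand top <= 16 * d%:R ^+ 3.
Proof.
have [n0 _ _ _ _] := inst.
have n_gt0 : 0 < n%:R :> R by rewrite ltr0n.
set X := \sum_(k < n) UW vot cand (top k).
have key := total_RD_welfare_ge; rewrite -/X in key.
have X_gt0 : 0 < X.
  rewrite ltNge; apply/negP => X_le0.
  have : 0 <= 16 * d%:R ^+ 3 :> R by rewrite mulr_ge0 // exprn_ge0.
  move/mulr_ge0_le0/(_ X_le0)/(le_trans key); by rewrite leNgt exprn_gt0.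
rewrite /RD_distortion /RD_welfare -/X ler_pdivrMr ?divr_gt0 //.
apply: le_trans max_UW_le _.
by rewrite mulrA ler_pdivlMr // -expr2.
Qed.

End UpperBound.

Section UnitVectors.
Variables (R : realType) (d : nat).

Definition unitv (j : 'I_d) : 'I_d -> R := fun i => (i == j)%:R.

Lemma unitv_ge0 j i : 0 <= unitv j i.
Proof. by rewrite ler0n. Qed.

Lemma dotp_unitv x j : dotp x (unitv j) = x j.
Proof.
rewrite /dotp (bigD1 j) //= /unitv eqxx mulr1 big1 ?addr0 // => i /negbTE ->.
by rewrite mulr0.
Qed.

Lemma sum_unitv j : \sum_(i < d) unitv j i = 1.
Proof. by rewrite -(dotp_unitv (fun=> 1) j); apply: eq_bigr => i _; rewrite mul1r. Qed.

Lemma unitv_simplex j : in_simplex (unitv j).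
Proof. by split; [apply: unitv_ge0 | apply: sum_unitv]. Qed.

Lemma cone_unitv x : (forall i, 0 <= x i) -> in_cone unitv x.
Proof.
move=> x0; exists x; split=> // i; rewrite -[LHS](dotp_unitv x i).
by apply: eq_bigr => j _; rewrite /unitv eq_sym.
Qed.

End UnitVectors.

Section PairInstance.
Variables (R : realType) (d : nat).

Definition pair_voter (k : 'I_d.+1) : 'I_d.+1 -> R :=
  fun i => (unitv R k i + unitv R ord0 i) / 2.

Lemma pair_voter_sum k : \sum_(i < d.+1) pair_voter k i = 1.
Proof. rewrite -mulr_suml big_split /= !sum_unitv; lra. Qed.

Lemma pair_voter_ge0 k i : 0 <= pair_voter k i.
Proof. by rewrite divr_ge0 // addr_ge0 // unitv_ge0. Qed.

Lemma pair_instance_valid : valid_instance pair_voter (@unitv R d.+1) id.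
Proof.
split=> // [k | j | k | k j]; rewrite ?dotp_unitv.
- by split; [apply: pair_voter_ge0 | apply: pair_voter_sum].
- exact: unitv_simplex.
- exact/cone_unitv/pair_voter_ge0.
rewrite /pair_voter /unitv eqxx; case: (eqVneq j k) => [-> // | _].
by case: (j == ord0); case: (k == ord0); rewrite /= ?mulr0n ?mulr1n; lra.
Qed.

Lemma pair_RD_welfare : RD_welfare pair_voter (@unitv R d.+1) id = 1.
Proof.
rewrite /RD_welfare /UW; under eq_bigr do under eq_bigr do rewrite dotp_unitv.
rewrite exchange_big /= (eq_bigr _ (fun k _ => pair_voter_sum k)).
by rewrite sumr_const card_ord divff // pnatr_eq0.
Qed.

Lemma pair_UW_hub : UW pair_voter (@unitv R d.+1) ord0 = (d.+2)%:R / 2.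
Proof.
rewrite /UW; under eq_bigr do rewrite dotp_unitv.
rewrite -mulr_suml big_split /= sumr_const card_ord.
rewrite (eq_bigr _ (fun k _ => congr1 (fun b : bool => b%:R) (eq_sym ord0 k))).
by rewrite (@sum_unitv R d.+1 ord0) /unitv eqxx /= mulr1n addrC natr1.
Qed.

Lemma pair_distortion_ge : d.+1%:R / 2 <= RD_distortion pair_voter (@unitv R d.+1) id.
Proof.
rewrite /RD_distortion pair_RD_welfare divr1.
apply: le_trans (le_bigmax _ _ ord0).
by rewrite pair_UW_hub ler_pM2r ?invr_gt0 // ler_nat.
Qed.

End PairInstance.

Theorem theorem7 (R : realType) :
  exists (c C : R) (N : nat), 0 < c /\ 0 < C /\
    forall d : nat, (N <= d)%N ->
      (* D(f_RD)(d) >= c * d : some instance has distortion at least c*d *)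
      (exists (n m : nat) (vot : 'I_n -> 'I_d -> R) (cand : 'I_m -> 'I_d -> R)
              (top : 'I_n -> 'I_m),
          valid_instance vot cand top /\ c * d%:R <= RD_distortion vot cand top) /\
      (* D(f_RD)(d) <= C * d^3 : every instance has distortion at most C*d^3 *)
      (forall (n m : nat) (vot : 'I_n -> 'I_d -> R) (cand : 'I_m -> 'I_d -> R)
              (top : 'I_n -> 'I_m),
          valid_instance vot cand top -> RD_distortion vot cand top <= C * d%:R ^+ 3).
Proof.
exists (1 / 2), 16, 1%N; split; first lra; split=> //.
case=> [//|d] _; split=> [|n m vot cand top]; last exact: RD_distortion_le.
exists d.+1, d.+1, (@pair_voter R d), (@unitv R d.+1), id.
by split; [apply: pair_instance_valid | rewrite mul1r mulrC; apply: pair_distortion_ge].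
Qed.
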